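(* Let $M\in\mathbb R^{n\times n}$ be sufficient and let the affine subspace $S=\{q+Q\theta:\theta\in\mathbb R^d\}$ lie in general position. Then for any two distinct complementary bases $B_1,B_2$, the relative interiors of the critical domains $S_{B_1}$ and $S_{B_2}$ are disjoint.
   Context: Let $M\in\mathbb R^{n\times n}$ and $A=[\,I\;\;-M\,]\in\mathbb R^{n\times 2n}$, columns indexed by $\{1,\dots,2n\}$; $A_{\cdot J}$ is the submatrix of columns indexed by $J$. Complementary index: $\bar i=i+n$ if $i\le n$, $\bar i=i-n$ if $i>n$. A set $J$ is complementary if $i\in J\Rightarrow\bar i\notin J$. A complementary basis is a complementary set $B$ with $|B|=n$ and $A_{\cdot B}$ invertible. Complementary cone: $\mathcal C(J)=\{A_{\cdot J}\lambda:\lambda\ge0\}$. Let $Q\in\mathbb R^{n\times d}$ have rank $d$, $q\in\mathbb R^n$, and $S=\{q+Q\theta:\theta\in\mathbb R^d\}$. The critical domain of a complementary basis $B$ is $S_B=\mathcal C(B)\cap S$. $S$ lies in general position if for every complementary basis $B$: $S\cap\mathcal C(B)\neq\emptyset$ implies $S\cap\operatorname{int}\mathcal C(B)\neq\emptyset$. $M$ is column sufficient if $[z_i(Mz)_i\le 0\ \forall i]\Rightarrow[z_i(Mz)_i=0\ \forall i]$; row sufficient if $M^T$ is column sufficient; sufficient if both. *)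

From HB Require Import structures.
From mathcomp Require Import all_boot all_order all_algebra.
Set Implicit Arguments. Unset Strict Implicit. Unset Printing Implicit Defensive.
Import Order.TTheory GRing.Theory Num.Theory.
Local Open Scope ring_scope.

Section LCP.
Variables (R : realFieldType) (n : nat).

(* A = [ I  -M ], columns indexed by 'I_(n + n): lshift = 1..n, rshift = n+1..2n *)
Definition Amat (M : 'M[R]_n) : 'M[R]_(n, n + n) := row_mx 1%:M (- M).

Definition cbar (i : 'I_(n + n)) : 'I_(n + n) :=
  match split i with
  | inl j => rshift n j
  | inr j => lshift n j
  end.

Definition complementary (J : {set 'I_(n + n)}) : Prop :=
  forall i, i \in J -> cbar i \notin J.

(* A_{.J}: the columns of A indexed by J (in increasing order) *)
Definition Acols (M : 'M[R]_n) (J : {set 'I_(n + n)}) : 'M[R]_(n, #|J|) :=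
  \matrix_(i < n, k < #|J|) Amat M i (enum_val k).

Definition compl_basis (M : 'M[R]_n) (B : {set 'I_(n + n)}) : Prop :=
  complementary B /\ #|B| = n /\ \rank (Acols M B) = n.

Definition ccone (M : 'M[R]_n) (J : {set 'I_(n + n)}) (z : 'cV[R]_n) : Prop :=
  exists lam : 'cV[R]_(#|J|), (forall k, 0 <= lam k 0) /\ z = Acols M J *m lam.

(* interior (w.r.t. the max norm, equivalent to any norm on R^n) *)
Definition interior (P : 'cV[R]_n -> Prop) (x : 'cV[R]_n) : Prop :=
  exists2 eps : R, 0 < eps &
    forall y : 'cV[R]_n, (forall i, `|y i 0 - x i 0| < eps) -> P y.

Definition aff_hull (P : 'cV[R]_n -> Prop) (y : 'cV[R]_n) : Prop :=
  exists (k : nat) (p : 'I_k -> 'cV[R]_n) (w : 'I_k -> R),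
    (forall j, P (p j)) /\ \sum_j w j = 1 /\ y = \sum_j w j *: p j.

Definition relint (P : 'cV[R]_n -> Prop) (x : 'cV[R]_n) : Prop :=
  P x /\ exists2 eps : R, 0 < eps &
    forall y : 'cV[R]_n, aff_hull P y -> (forall i, `|y i 0 - x i 0| < eps) -> P y.

Variable d : nat.

Definition affS (Q : 'M[R]_(n, d)) (q : 'cV[R]_n) (z : 'cV[R]_n) : Prop :=
  exists theta : 'cV[R]_d, z = q + Q *m theta.

Definition crit_domain (M : 'M[R]_n) (Q : 'M[R]_(n, d)) (q : 'cV[R]_n)
  (B : {set 'I_(n + n)}) (z : 'cV[R]_n) : Prop :=
  ccone M B z /\ affS Q q z.

Definition general_position (M : 'M[R]_n) (Q : 'M[R]_(n, d)) (q : 'cV[R]_n) : Prop :=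
  forall B, compl_basis M B ->
    (exists z, affS Q q z /\ ccone M B z) ->
    (exists z, affS Q q z /\ interior (ccone M B) z).

End LCP.

Definition column_sufficient (R : realFieldType) (n : nat) (M : 'M[R]_n) : Prop :=
  forall z : 'cV[R]_n,
    (forall i, z i 0 * (M *m z) i 0 <= 0) -> (forall i, z i 0 * (M *m z) i 0 = 0).

Definition row_sufficient (R : realFieldType) (n : nat) (M : 'M[R]_n) : Prop :=
  column_sufficient M^T.

Definition sufficient (R : realFieldType) (n : nat) (M : 'M[R]_n) : Prop :=
  column_sufficient M /\ row_sufficient M.

From HB Require Import structures.
From mathcomp Require Import all_boot all_order all_algebra.
From mathcomp Require Import ring.
Import Order.TTheory GRing.Theory Num.Theory.
Local Open Scope ring_scope.
Set Implicit Arguments. Unset Strict Implicit. Unset Printing Implicit Defensive.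

(* Suppose z lies in the relative interiors of both S_B1 and S_B2.  General
   position yields p1 in S /\ int C(B1) and p2 in S /\ int C(B2).  Moving from
   z a little towards p1 stays inside S_B2 (z is relatively interior and the
   direction p1 - z is realised inside S_B2 near p2), and the point
   x = z + t (p1 - z) is a combination of the columns of A_B1 with strictly
   positive weights, while also a nonnegative combination of the columns of
   A_B2.  The key fact (a column-sufficiency argument in the style of
   Cottle, Pang and Venkateswaran) is that two such complementary representations
   of the same vector force B1 = B2. *)

Section ComplementaryBases.
Variables (R : realFieldType) (n : nat).

Lemma cbar_l (i : 'I_n) : cbar (lshift n i) = rshift n i.
Proof. by rewrite /cbar (unsplitK (inl _ i)). Qed.

Lemma cbar_r (i : 'I_n) : cbar (rshift n i) = lshift n i.
Proof. by rewrite /cbar (unsplitK (inr _ i)). Qed.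

Definition var_index (j : 'I_(n + n)) : 'I_n :=
  match split j with inl i => i | inr i => i end.

Lemma var_index_eq j j' : var_index j = var_index j' -> j' = j \/ j' = cbar j.
Proof.
rewrite /var_index; case: split_ordP => i ->; case: split_ordP => i' -> /= ->.
- by left.
- by right; rewrite cbar_l.
- by right; rewrite cbar_r.
- by left.
Qed.

Lemma complementary_full (B : {set 'I_(n + n)}) :
  complementary B -> #|B| = n -> forall j, j \in B \/ cbar j \in B.
Proof.
move=> complB cardB j.
have inj : {in B &, injective var_index}.
  move=> a b aB bB /var_index_eq [//|ba].
  by move: (complB a aB); rewrite -ba bB.
have onto : var_index @: B = setT.
  by apply/eqP; rewrite eqEcard subsetT /= card_in_imset // cardsT card_ord cardB.
have : var_index j \in var_index @: B by rewrite onto inE.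
by case/imsetP => j' j'B /var_index_eq [] <-; [left | right].
Qed.

Definition supported_on (B : {set 'I_(n + n)}) (u : 'cV[R]_(n + n)) : Prop :=
  forall j, j \notin B -> u j 0 = 0.

Definition ext (B : {set 'I_(n + n)}) (l : 'cV[R]_#|B|) : 'cV[R]_(n + n) :=
  \col_j \sum_(k : 'I_#|B| | enum_val k == j) l k 0.

Definition restr (B : {set 'I_(n + n)}) (u : 'cV[R]_(n + n)) : 'cV[R]_#|B| :=
  \col_k u (enum_val k) 0.

Lemma ext_supported (B : {set 'I_(n + n)}) (l : 'cV[R]_#|B|) : supported_on B (ext l).
Proof.
move=> j jB; rewrite mxE big_pred0 // => k.
by apply/eqP => kj; move: jB; rewrite -kj enum_valP.
Qed.

Lemma ext_enum_val (B : {set 'I_(n + n)}) (l : 'cV[R]_#|B|) k : ext l (enum_val k) 0 = l k 0.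
Proof.
rewrite mxE (eq_bigl (pred1 k)) ?big_pred1_eq // => k'.
by rewrite /= (inj_eq enum_val_inj).
Qed.

Lemma ext_gt0 (B : {set 'I_(n + n)}) (l : 'cV[R]_#|B|) :
  (forall k, 0 < l k 0) -> forall j, j \in B -> 0 < ext l j 0.
Proof. by move=> l_gt0 j jB; rewrite -(enum_rankK_in jB jB) ext_enum_val. Qed.

Lemma ext_ge0 (B : {set 'I_(n + n)}) (l : 'cV[R]_#|B|) :
  (forall k, 0 <= l k 0) -> forall j, 0 <= ext l j 0.
Proof. by move=> l_ge0 j; rewrite mxE sumr_ge0. Qed.

Lemma supported_complementary (B : {set 'I_(n + n)}) (u : 'cV[R]_(n + n)) :
  complementary B -> supported_on B u -> forall j, u j 0 * u (cbar j) 0 = 0.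
Proof.
move=> complB uB j; case: (boolP (j \in B)) => jB; last by rewrite uB ?mul0r.
by rewrite [u (cbar j) 0]uB ?mulr0 // complB.
Qed.

Variable M : 'M[R]_n.

Lemma Amat_supported (B : {set 'I_(n + n)}) (u : 'cV[R]_(n + n)) :
  supported_on B u -> Amat M *m u = Acols M B *m restr B u.
Proof.
move=> uB; apply/matrixP => i c; rewrite (ord1 c) !mxE.
rewrite (bigID (mem B)) /= [X in _ + X]big1 ?addr0; last by move=> j jB; rewrite uB ?mulr0.
by rewrite (big_enum_val (fun j => Amat M i j * u j 0)); apply: eq_bigr => k _; rewrite !mxE.
Qed.

Lemma Amat_ext (B : {set 'I_(n + n)}) (l : 'cV[R]_#|B|) : Amat M *m ext l = Acols M B *m l.
Proof.
rewrite (Amat_supported (ext_supported l)); congr (_ *m _).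
by apply/matrixP => k c; rewrite (ord1 c) mxE ext_enum_val.
Qed.

Lemma Acols_inj (B : {set 'I_(n + n)}) : compl_basis M B -> injective (@mulmx R _ _ 1 (Acols M B)).
Proof.
case=> _ [cardB rankB] l1 l2 E.
have free : row_free (Acols M B)^T by rewrite /row_free mxrank_tr rankB cardB.
by apply: trmx_inj; apply: (row_free_inj free); rewrite -!trmx_mul E.
Qed.

Lemma supported_inj (B : {set 'I_(n + n)}) (u1 u2 : 'cV[R]_(n + n)) : compl_basis M B ->
  supported_on B u1 -> supported_on B u2 -> Amat M *m u1 = Amat M *m u2 -> u1 = u2.
Proof.
move=> basB u1B u2B; rewrite (Amat_supported u1B) (Amat_supported u2B).
move/(Acols_inj basB) => E; apply/matrixP => j c; rewrite (ord1 c).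
case: (boolP (j \in B)) => jB; last by rewrite u1B ?u2B.
by have := congr1 (fun v : 'cV[R]_#|B| => v (enum_rank_in jB j) 0) E; rewrite !mxE enum_rankK_in.
Qed.

Lemma Amat_split (u : 'cV[R]_(n + n)) : Amat M *m u = usubmx u - M *m dsubmx u.
Proof. by rewrite -{1}[u]vsubmxK /Amat mul_row_col mul1mx mulNmx. Qed.

(* Column sufficiency: if w1 - M y1 = w2 - M y2 are two nonnegative
   complementary solutions, then also w1 y2 = 0 and w2 y1 = 0 componentwise,
   because z = y1 - y2 satisfies z_i (M z)_i = -(w1_i y2_i + w2_i y1_i) <= 0. *)
Lemma column_sufficient_cross (w1 y1 w2 y2 : 'cV[R]_n) :
  column_sufficient M ->
  (forall i, 0 <= w1 i 0) -> (forall i, 0 <= y1 i 0) ->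
  (forall i, 0 <= w2 i 0) -> (forall i, 0 <= y2 i 0) ->
  (forall i, w1 i 0 * y1 i 0 = 0) -> (forall i, w2 i 0 * y2 i 0 = 0) ->
  w1 - M *m y1 = w2 - M *m y2 ->
  forall i, w1 i 0 * y2 i 0 = 0 /\ w2 i 0 * y1 i 0 = 0.
Proof.
move=> Mcs w1_ge0 y1_ge0 w2_ge0 y2_ge0 c1 c2 E.
have Mz : M *m (y1 - y2) = w1 - w2.
  apply/eqP; rewrite mulmxBr subr_eq addrAC -(subrK (M *m y1) w1) E.
  by rewrite eq_sym [_ + M *m y1 + _]addrAC subrK addrC addKr.
have prod i : (y1 - y2) i 0 * (M *m (y1 - y2)) i 0
              = - (w1 i 0 * y2 i 0 + w2 i 0 * y1 i 0).
  rewrite Mz !mxE; transitivity (- (w1 i 0 * y2 i 0 + w2 i 0 * y1 i 0)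
    + (w1 i 0 * y1 i 0 + w2 i 0 * y2 i 0)); first by ring.
  by rewrite c1 c2 !addr0.
have vanish : forall i, (y1 - y2) i 0 * (M *m (y1 - y2)) i 0 = 0.
  by apply: (Mcs (y1 - y2)) => i; rewrite prod oppr_le0 addr_ge0 // mulr_ge0.
move=> i; move/eqP: (vanish i); rewrite prod oppr_eq0 paddr_eq0 ?mulr_ge0 //.
by case/andP => /eqP -> /eqP ->.
Qed.

Lemma complementary_cross (u1 u2 : 'cV[R]_(n + n)) :
  column_sufficient M -> (forall j, 0 <= u1 j 0) -> (forall j, 0 <= u2 j 0) ->
  (forall j, u1 j 0 * u1 (cbar j) 0 = 0) -> (forall j, u2 j 0 * u2 (cbar j) 0 = 0) ->
  Amat M *m u1 = Amat M *m u2 -> forall j, u1 (cbar j) 0 * u2 j 0 = 0.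
Proof.
move=> Mcs u1_ge0 u2_ge0 c1 c2; rewrite !Amat_split => E.
have compl (u : 'cV[R]_(n + n)) : (forall j, u j 0 * u (cbar j) 0 = 0) ->
    forall i, usubmx u i 0 * dsubmx u i 0 = 0.
  by move=> cu i; rewrite !mxE -cbar_l cu.
have nonneg (u : 'cV[R]_(n + n)) : (forall j, 0 <= u j 0) ->
    (forall i, 0 <= usubmx u i 0) /\ (forall i, 0 <= dsubmx u i 0).
  by move=> u_ge0; split=> i; rewrite mxE.
have [w1_ge0 y1_ge0] := nonneg _ u1_ge0; have [w2_ge0 y2_ge0] := nonneg _ u2_ge0.
have cross := column_sufficient_cross Mcs w1_ge0 y1_ge0 w2_ge0 y2_ge0 (compl _ c1) (compl _ c2) E.
move=> j; case: (split_ordP j) => i ->; have [h1 h2] := cross i; move: h1 h2; rewrite !mxE.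
- by move=> _ h2; rewrite cbar_l mulrC.
- by rewrite cbar_r.
Qed.

Lemma complementary_representation_unique (B1 B2 : {set 'I_(n + n)}) (u1 u2 : 'cV[R]_(n + n)) :
  column_sufficient M -> compl_basis M B1 -> compl_basis M B2 ->
  (forall j, j \in B1 -> 0 < u1 j 0) -> supported_on B1 u1 ->
  (forall j, 0 <= u2 j 0) -> supported_on B2 u2 ->
  Amat M *m u1 = Amat M *m u2 -> B1 = B2.
Proof.
move=> Mcs bas1 bas2 u1_gt0 u1B1 u2_ge0 u2B2 E.
have u1_ge0 j : 0 <= u1 j 0.
  by case: (boolP (j \in B1)) => jB; [exact/ltW/u1_gt0 | rewrite u1B1].
have cross := complementary_cross Mcs u1_ge0 u2_ge0
  (supported_complementary bas1.1 u1B1) (supported_complementary bas2.1 u2B2) E.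
have u2B1 : supported_on B1 u2.
  move=> j jB1; have cjB1 : cbar j \in B1.
    by case: (complementary_full bas1.1 bas1.2.1 j) => // jB; rewrite jB in jB1.
  by move/eqP: (cross j); rewrite mulf_eq0 (gt_eqF (u1_gt0 _ cjB1)) => /eqP.
have u12 := supported_inj bas1 u1B1 u2B1 E.
apply/eqP; rewrite eqEcard bas1.2.1 bas2.2.1 leqnn andbT.
apply/subsetP => j jB1; apply/negPn/negP => jB2.
by move: (u1_gt0 _ jB1); rewrite u12 u2B2 // ltxx.
Qed.

End ComplementaryBases.

Section InteriorGeometry.
Variables (R : realFieldType) (n : nat).

Lemma small_scaling (v : 'cV[R]_n) (c : R) : 0 < c ->
  exists2 s, 0 < s & s <= 1 /\ forall i, s * `|v i 0| < c.
Proof.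
move=> c_gt0; pose S := \sum_i `|v i 0|; pose D := 1 + c + S.
have S_ge0 : 0 <= S by apply: sumr_ge0.
have D_gt0 : 0 < D by rewrite /D -addrA ltr_wpDr // addr_ge0 // ltW.
exists (c / D); first by rewrite divr_gt0.
split; first by rewrite ler_pdivrMr // mul1r /D ler_wpDr // ler_wpDl // ltW.
move=> i; have viS : `|v i 0| <= S by rewrite /S (bigD1 i) //= lerDl sumr_ge0.
apply: (le_lt_trans (y := c / D * S)); first by rewrite ler_wpM2l // ltW // divr_gt0.
rewrite -[X in _ < X](divfK (lt0r_neq0 D_gt0)) ltr_pM2l ?divr_gt0 //.
by rewrite /D ltr_pwDl ?addr_gt0.
Qed.

Lemma interior_shift (P : 'cV[R]_n -> Prop) (p v : 'cV[R]_n) :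
  interior P p -> exists2 s, 0 < s & P (p + s *: v).
Proof.
case=> eps eps_gt0 Pball; have [s s_gt0 [_ sv]] := small_scaling v eps_gt0.
exists s => //; apply: Pball => i.
by rewrite !mxE addrAC subrr add0r normrM gtr0_norm.
Qed.

(* From a relatively interior point z of P one can move a little along any
   direction v that is realised inside P, i.e. with p and p + s v in P:
   z + t v is then an affine combination of z, p + s v and p. *)
Lemma relint_shift (P : 'cV[R]_n -> Prop) (z p v : 'cV[R]_n) (s : R) :
  relint P z -> P p -> P (p + s *: v) -> 0 < s ->
  exists2 t, 0 < t & t <= 1 /\ P (z + t *: v).
Proof.
move=> [Pz [eps eps_gt0 Prel]] Pp Ppv s_gt0.
have [t t_gt0 [t_le1 tv]] := small_scaling v eps_gt0.
exists t => //; split => //; apply: Prel => [|i]; last first.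
  by rewrite !mxE addrAC subrr add0r normrM gtr0_norm.
exists 3, (fun j : 'I_3 => nth 0 [:: z; p + s *: v; p] j),
          (fun j : 'I_3 => nth 0 [:: 1; t / s; - (t / s)] j).
split; first by case=> [[|[|[|//]]] ?].
rewrite !big_ord_recl !big_ord0 /= !addr0 subrr addr0; split=> //.
by rewrite scale1r scalerDr scalerA divfK ?gt_eqF // scaleNr addrAC subrr add0r.
Qed.

Variable M : 'M[R]_n.

Lemma interior_ccone_pos (B : {set 'I_(n + n)}) (p : 'cV[R]_n) : compl_basis M B ->
  interior (ccone M B) p ->
  exists l : 'cV[R]_#|B|, (forall k, 0 < l k 0) /\ p = Acols M B *m l.
Proof.
move=> basB pint; have [l [l_ge0 pl]] : ccone M B p.
  by case: pint => eps eps_gt0; apply => i; rewrite subrr normr0.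
exists l; split => // k; rewrite lt0r l_ge0 andbT; apply/eqP => lk0.
pose e := delta_mx k (0 : 'I_1) : 'cV[R]_#|B|.
have [s s_gt0 [mu [mu_ge0 pmu]]] := interior_shift (- (Acols M B *m e)) pint.
have : mu = l - s *: e.
  by apply: (Acols_inj basB); rewrite -pmu mulmxBr -scalemxAr pl scalerN.
move/(congr1 (fun m : 'cV[R]_#|B| => m k 0)); rewrite !mxE lk0 !eqxx mulr1 sub0r.
by move=> muk; move: (mu_ge0 k); rewrite muk oppr_ge0 leNgt s_gt0.
Qed.

Lemma ccone_segment_pos (B : {set 'I_(n + n)}) (z p : 'cV[R]_n) (l1 : 'cV[R]_#|B|) (t : R) :
  ccone M B z -> (forall k, 0 < l1 k 0) -> p = Acols M B *m l1 -> 0 < t -> t <= 1 ->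
  exists l : 'cV[R]_#|B|, (forall k, 0 < l k 0) /\ z + t *: (p - z) = Acols M B *m l.
Proof.
case=> l0 [l0_ge0 zl0] l1_gt0 pl1 t_gt0 t_le1.
exists ((1 - t) *: l0 + t *: l1); split.
  by move=> k; rewrite !mxE ltr_wpDl ?mulr_gt0 // mulr_ge0 ?subr_ge0.
rewrite mulmxDr -!scalemxAr -zl0 -pl1 scalerBl scale1r scalerBr.
by rewrite addrA addrAC.
Qed.

Variable d : nat.

Lemma affS_shift (Q : 'M[R]_(n, d)) (q z p1 p2 : 'cV[R]_n) (s : R) :
  affS Q q z -> affS Q q p1 -> affS Q q p2 -> affS Q q (p2 + s *: (p1 - z)).
Proof.
case=> th0 -> [th1 ->] [th2 ->]; exists (th2 + s *: (th1 - th0)).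
by rewrite mulmxDr -scalemxAr mulmxBr addrA opprD addrACA subrr add0r.
Qed.

End InteriorGeometry.

Theorem mainTheorem5 (R : realFieldType) (n d : nat)
  (M : 'M[R]_n) (Q : 'M[R]_(n, d)) (q : 'cV[R]_n) :
  sufficient M ->
  \rank Q = d ->
  general_position M Q q ->
  forall B1 B2 : {set 'I_(n + n)},
    compl_basis M B1 -> compl_basis M B2 -> B1 != B2 ->
    forall z : 'cV[R]_n,
      ~ (relint (crit_domain M Q q B1) z /\ relint (crit_domain M Q q B2) z).
Proof.
move=> [Mcs _] _ gp B1 B2 bas1 bas2 B12 z [[[z_cone1 z_S] _] z_rel2].
have [p1 [p1_S p1_int]] := gp B1 bas1 (ex_intro _ z (conj z_S z_cone1)).
have [p2 [p2_S p2_int]] := gp B2 bas2 (ex_intro _ z (conj z_S z_rel2.1.1)).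
have [s s_gt0 p2v_cone] := interior_shift (p1 - z) p2_int.
have p2_dom : crit_domain M Q q B2 p2.
  by split=> //; case: p2_int => e e_gt0; apply => i; rewrite subrr normr0.
have p2v_dom : crit_domain M Q q B2 (p2 + s *: (p1 - z)).
  by split=> //; apply: affS_shift.
have [t t_gt0 [t_le1 [[mu [mu_ge0 x_mu]] _]]] :=
  relint_shift z_rel2 p2_dom p2v_dom s_gt0.
have [l1 [l1_gt0 p1_l1]] := interior_ccone_pos bas1 p1_int.
have [l [l_gt0 x_l]] := ccone_segment_pos z_cone1 l1_gt0 p1_l1 t_gt0 t_le1.
have same_point : Amat M *m ext l = Amat M *m ext mu by rewrite !Amat_ext -x_l.
move/eqP: B12; apply; apply: (complementary_representation_unique Mcs bas1 bas2
  (ext_gt0 l_gt0) (ext_supported l) (ext_ge0 mu_ge0) (ext_supported mu) same_point).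
Qed.
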